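(* Let $k\ge 1$ and let $G$ be a complete $k$-partite graph in which every partite set has at least $2$ vertices. Then $\rho_T(G)=k$.
   Context: Graphs are finite and simple. A complete $k$-partite graph is one whose vertex set is partitioned into $k$ nonempty independent sets (partite sets) such that two vertices are adjacent iff they lie in different partite sets. For $u,v\in(\mathbb{R}\cup\{\infty\})^k$ the min-plus tropical dot product is $u\odot v=\min_i(u_i+v_i)$. A min-plus $k$-tropical dot product representation of $G=(V,E)$ is a map $f:V\to(\mathbb{R}\cup\{\infty\})^k$ with a threshold $t>0$ such that for all distinct $x,y\in V$: $xy\in E$ iff $f(x)\odot f(y)\ge t$. $\rho_T(G)$ is the least $k\ge 1$ for which such a representation exists. *)

From mathcomp Require Import all_boot.
From Stdlib Require Import Reals.

Set Implicit Arguments.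
Unset Strict Implicit.
Unset Printing Implicit Defensive.

(* Extended reals R ∪ {∞}: [Some r] is the real r, [None] is ∞. *)
Definition xreal := option R.

Definition xadd (a b : xreal) : xreal :=
  match a, b with
  | Some x, Some y => Some (x + y)%R
  | _, _ => None
  end.

Definition xmin (a b : xreal) : xreal :=
  match a, b with
  | None, _ => b
  | _, None => a
  | Some x, Some y => Some (Rmin x y)
  end.

Definition xge (a : xreal) (t : R) : Prop :=
  match a with
  | None => True
  | Some x => (t <= x)%R
  end.

Definition tdot (k : nat) (u v : 'I_k -> xreal) : xreal :=
  foldr (fun i acc => xmin (xadd (u i) (v i)) acc) None (enum 'I_k).

Definition tropical_rep (T : finType) (e : rel T) (k : nat) : Prop :=
  exists (f : T -> 'I_k -> xreal) (t : R),
    (0 < t)%R /\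
    forall x y : T, x <> y -> (e x y <-> xge (tdot (f x) (f y)) t).

Definition rhoT_eq (T : finType) (e : rel T) (k : nat) : Prop :=
  (1 <= k)%N /\ tropical_rep e k /\
  forall j : nat, (1 <= j)%N -> tropical_rep e j -> (k <= j)%N.

Definition complete_multipartite_big (T : finType) (e : rel T) (k : nat)
    (p : T -> 'I_k) : Prop :=
  (forall x y : T, x != y -> e x y = (p x != p y)) /\
  (forall x : T, e x x = false) /\
  (forall i : 'I_k, (2 <= #|[pred x | p x == i]|)%N).

From mathcomp Require Import all_boot.
From Stdlib Require Import Reals Lra Classical ClassicalEpsilon.

Set Implicit Arguments.
Unset Strict Implicit.
Unset Printing Implicit Defensive.

(* The upper bound gives the vertices of part i the vector with 0 in
   coordinate i and 1 elsewhere, with threshold 1.  For the lower bound, a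
   tropical representation of dimension j separates every non-adjacent pair
   {a, b} by some coordinate c where f a c + f b c < t.  If two non-adjacent
   pairs {a, b}, {a', b'} lying in different parts were separated by the same
   coordinate, the edges aa' and bb' would give f a c + f a' c >= t and
   f b c + f b' c >= t, and summing the four inequalities yields 2t < 2t.
   Choosing a non-adjacent pair inside each part therefore gives an injection
   of the k parts into the j coordinates. *)

Lemma xge_xmin (a b : xreal) (t : R) : xge (xmin a b) t <-> xge a t /\ xge b t.
Proof.
case: a => [x|]; case: b => [y|] /=; try tauto.
split=> [le_t_min | [le_tx le_ty]]; last exact: Rmin_glb.
by split; apply: Rle_trans le_t_min _; [apply: Rmin_l | apply: Rmin_r].
Qed.

Lemma xge_foldr_xmin (I : eqType) (g : I -> xreal) (t : R) (s : seq I) :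
  xge (foldr (fun i acc => xmin (g i) acc) None s) t <->
  (forall i, i \in s -> xge (g i) t).
Proof.
elim: s => [|a s IHs] /=; first by split=> // _ i; rewrite in_nil.
rewrite xge_xmin IHs; split=> [[ga gs] i | gall].
  by rewrite in_cons => /orP [/eqP -> // | /gs].
split; first by apply: gall; rewrite mem_head.
by move=> i i_s; apply: gall; rewrite in_cons i_s orbT.
Qed.

Lemma xge_tdot (k : nat) (u v : 'I_k -> xreal) (t : R) :
  xge (tdot u v) t <-> (forall i, xge (xadd (u i) (v i)) t).
Proof.
rewrite /tdot (@xge_foldr_xmin _ (fun i => xadd (u i) (v i))).
by split=> uv i => [|_]; apply: uv; rewrite ?mem_enum.
Qed.

Lemma not_xge_xadd (a b : xreal) (t : R) : ~ xge (xadd a b) t ->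
  exists x y, a = Some x /\ b = Some y /\ (x + y < t)%R.
Proof.
case: a => [x|]; case: b => [y|] //= not_le.
by exists x, y; do 2 split=> //; apply: Rnot_le_lt.
Qed.

Section Representation.

Variables (T : finType) (e : rel T) (j : nat) (f : T -> 'I_j -> xreal) (t : R).
Hypothesis f_rep : forall {x y : T}, x <> y -> (e x y <-> xge (tdot (f x) (f y)) t).

Definition separating (c : 'I_j) (a b : T) : Prop :=
  exists xa xb, f a c = Some xa /\ f b c = Some xb /\ (xa + xb < t)%R.

Lemma nonedge_separating (a b : T) : a <> b -> ~ e a b -> exists c, separating c a b.
Proof.
move=> neq_ab nab.
have : ~ xge (tdot (f a) (f b)) t by move/(f_rep neq_ab).2.
rewrite xge_tdot => /not_all_ex_not [c /not_xge_xadd sep_c].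
by exists c.
Qed.

Lemma edge_xge_coord (c : 'I_j) (x y : T) :
  x <> y -> e x y -> xge (xadd (f x c) (f y c)) t.
Proof. by move=> neq_xy /(f_rep neq_xy) /xge_tdot. Qed.

Lemma separating_not_joined (c : 'I_j) (a b a' b' : T) :
  separating c a b -> separating c a' b' ->
  a <> a' -> b <> b' -> e a a' -> e b b' -> False.
Proof.
move=> [xa [xb [fa [fb lt_ab]]]] [xa' [xb' [fa' [fb' lt_ab']]]] naa nbb eaa ebb.
have := edge_xge_coord c naa eaa; have := edge_xge_coord c nbb ebb.
rewrite fa fb fa' fb' /=; lra.
Qed.

End Representation.

Section CompleteMultipartite.

Variables (T : finType) (e : rel T) (k : nat) (p : T -> 'I_k).
Hypothesis e_parts : forall x y : T, x != y -> e x y = (p x != p y).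

Lemma complete_multipartite_rep : tropical_rep e k.
Proof.
exists (fun x i => Some (if i == p x then 0%R else 1%R)), 1%R.
split=> [|x y /eqP neq_xy]; first lra.
rewrite e_parts // xge_tdot /=; split=> [pxy i | coords].
  case: eqP => [->|_]; case: eqP => [py|_]; try lra.
  by rewrite py eqxx in pxy.
by apply/eqP=> pxy; move: (coords (p x)); rewrite eqxx pxy eqxx; lra.
Qed.

Hypothesis big_parts : forall i : 'I_k, (2 <= #|[pred x | p x == i]|)%N.

Lemma part_separated (j : nat) (f : T -> 'I_j -> xreal) (t : R) :
  (forall x y, x <> y -> (e x y <-> xge (tdot (f x) (f y)) t)) ->
  forall i : 'I_k, exists c : 'I_j,
    exists a b, [/\ p a = i, p b = i, a <> b & separating f t c a b].
Proof.
move=> f_rep i; have /card_gt1P [a [b []]] := big_parts i.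
rewrite !inE => /eqP pa /eqP pb /eqP neq_ab.
have [|c sep_c] := nonedge_separating f_rep neq_ab.
  by rewrite e_parts ?pa ?pb ?eqxx //; apply/eqP.
by exists c, a, b.
Qed.

Lemma complete_multipartite_rep_dim (j : nat) : tropical_rep e j -> (k <= j)%N.
Proof.
move=> [f [t [_ f_rep]]].
have [cf cfP] : exists cf : 'I_k -> 'I_j, forall i,
    exists a b, [/\ p a = i, p b = i, a <> b & separating f t (cf i) a b].
  pose sep_i i := constructive_indefinite_description _ (part_separated f_rep i).
  by exists (fun i => proj1_sig (sep_i i)) => i; exact: (proj2_sig (sep_i i)).
have cf_inj : injective cf.
  move=> i i' cfi; apply/eqP/negPn/negP => neq_i.
  have [a [b [pa pb _ sep]]] := cfP i; have [a' [b' [pa' pb' _ sep']]] := cfP i'.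
  rewrite -cfi in sep'.
  have cross u w : p u = i -> p w = i' -> u <> w /\ e u w.
    move=> pu pw; have neq_uw : u != w by apply: contraNneq neq_i => uw; rewrite -pu -pw uw.
    by split; [apply/eqP | rewrite e_parts // pu pw].
  have [naa eaa] := cross _ _ pa pa'; have [nbb ebb] := cross _ _ pb pb'.
  exact: (separating_not_joined f_rep sep sep' naa nbb eaa ebb).
by have := leq_card cf cf_inj; rewrite !card_ord.
Qed.

End CompleteMultipartite.

Theorem mainTheorem14 (k : nat) (T : finType) (e : rel T) (p : T -> 'I_k) :
  (1 <= k)%N -> complete_multipartite_big e p -> rhoT_eq e k.
Proof.
move=> k_gt0 [e_parts [_ big_parts]]; split=> //; split.
  exact: complete_multipartite_rep e_parts.
by move=> j _; apply: complete_multipartite_rep_dim e_parts big_parts j.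
Qed.
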